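(* Let $N\geq2$, let $\mathcal{H}_{X_1},\dots,\mathcal{H}_{X_N}$ be finite-dimensional Hilbert spaces and let $\rho=|V\rangle\langle V|$ be a pure state on $\mathcal{H}_{X_1}\otimes\cdots\otimes\mathcal{H}_{X_N}$ such that $I(X_1:X_j)_\rho=0$ for all $j\neq1$. For each $i$, let $\lambda^i_1\geq\lambda^i_2\geq\cdots$ be the eigenvalues of $\rho_{X_i}$ in decreasing order and $|e^i_1\rangle,|e^i_2\rangle,\dots$ a corresponding orthonormal eigenbasis of $\mathcal{H}_{X_i}$. Write $|V\rangle=\sum_{x_1,\dots,x_N}V_{x_1\dots x_N}|e^1_{x_1}\rangle\otimes\cdots\otimes|e^N_{x_N}\rangle$, and set $\epsilon_i=1-\lambda^i_1$ and $\varepsilon=\sum_{i=1}^N\epsilon_i$. Then $$\sum_{x_1>1}|V_{x_1 1\dots1}|^2\geq\epsilon_1(1+\epsilon_1-\varepsilon).$$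
   Context: $\rho_{\mathcal X}$ denotes the reduced state (partial trace over the factors not in $\mathcal X$). Von Neumann entropy of a density operator $\sigma$ is $-\mathrm{Tr}[\sigma\log\sigma]$ (binary logarithm); $H(\mathcal X)_\rho$ is the entropy of $\rho_{\mathcal X}$, and $I(X_i:X_j)_\rho=H(X_i)_\rho+H(X_j)_\rho-H(X_iX_j)_\rho$. The sum runs over indices $x_1=2,\dots,\dim\mathcal{H}_{X_1}$, with all other indices equal to $1$. *)

From HB Require Import structures.
From mathcomp Require Import all_boot all_order all_algebra.
From mathcomp Require Import spectral.
From mathcomp Require Import complex.
From mathcomp Require Import reals exp.

Set Implicit Arguments.
Unset Strict Implicit.
Unset Printing Implicit Defensive.

Import Order.TTheory GRing.Theory Num.Theory Num.Def.
Local Open Scope ring_scope.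

Section Quantum.
Variable R : realType.
Local Notation C := (R[i]).

Definition log2 (t : R) : R := ln t / ln 2.
Definition xlog2x (t : R) : R := if t == 0 then 0 else t * log2 t.

Definition mx_of_fun (T : finType) (f : T -> T -> C) : 'M[C]_#|T| :=
  \matrix_(a, b) f (enum_val a) (enum_val b).

(* von Neumann entropy -Tr[s log2 s] of a (Hermitian, PSD) density operator,
   computed from its eigenvalues (with multiplicity), given by the spectral
   decomposition of mathcomp's spectral.v *)
Definition vN_entropy (T : finType) (f : T -> T -> C) : R :=
  - \sum_(k < #|T|) xlog2x (complex.Re (spectral_diag (mx_of_fun f) 0 k)).

Variables (N : nat) (d : 'I_N -> nat).

(* computational basis indices of H_{X_1} (x) ... (x) H_{X_N} *)
Definition Idx := {dffun forall i : 'I_N, 'I_(d i)}.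

(* reduced state rho_{X_i} of rho = |V><V| *)
Definition red1 (V : Idx -> C) (i : 'I_N) (a b : 'I_(d i)) : C :=
  \sum_(x : Idx | x i == a) \sum_(y : Idx | (y i == b) &&
        [forall k, (k != i) ==> (val (x k) == val (y k))])
     V x * conjC (V y).

(* reduced state rho_{X_i X_j} of rho = |V><V| *)
Definition red2 (V : Idx -> C) (i j : 'I_N)
    (p q : ('I_(d i) * 'I_(d j))%type) : C :=
  \sum_(x : Idx | (x i == p.1) && (x j == p.2))
   \sum_(y : Idx | [&& y i == q.1, y j == q.2 &
        [forall k, ((k != i) && (k != j)) ==> (val (x k) == val (y k))]])
     V x * conjC (V y).

Definition H1 (V : Idx -> C) (i : 'I_N) : R := vN_entropy (@red1 V i).
Definition H2 (V : Idx -> C) (i j : 'I_N) : R := vN_entropy (@red2 V i j).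

Definition mutinf (V : Idx -> C) (i j : 'I_N) : R :=
  H1 V i + H1 V j - H2 V i j.

(* coefficients of |V> in the product basis e^1_{x_1} (x) ... (x) e^N_{x_N},
   where e^i_k is the k-th row of the unitary matrix U i *)
Definition coeff (U : forall i : 'I_N, 'M[C]_(d i)) (V : Idx -> C) (x : Idx) : C :=
  \sum_(y : Idx) (\prod_(i < N) conjC (U i (x i) (y i))) * V y.

Definition normsq (z : C) : R := complex.Re z ^+ 2 + complex.Im z ^+ 2.

End Quantum.

Definition party1 (N : nat) (hN : (2 <= N)%N) : 'I_N :=
  Ordinal (leq_trans (isT : (1 < 2)%N) hN).

(** Measuring |V> in the product eigenbasis gives the distribution
    p(x) = |V_x|^2, whose one-party marginals are the spectra lambda^i.
    For j <> 1, the two-party marginal D of p on (x_1, x_j) is the diagonal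
    of rho_{X_1 X_j} in the product eigenbasis, and it has marginals lambda^1
    and lambda^j.  By Klein's inequality, H(X_1 X_j) is at most the cross
    entropy -sum_l D_l log (lambda^1 (x) lambda^j)_l, which equals
    H(X_1) + H(X_j); so I(X_1 : X_j) = 0 is the equality case, and it forces
    D = lambda^1 (x) lambda^j.  Inclusion-exclusion then gives
    p(x_1 > 1, x_j > 1) = eps_1 eps_j, and the union bound over j <> 1 gives
    p(x_1 > 1, x_j = 1 for all j <> 1) >= eps_1 - sum_{j<>1} eps_1 eps_j
    = eps_1 (1 + eps_1 - varepsilon). *)

From HB Require Import structures.
From mathcomp Require Import all_boot all_order all_algebra.
From mathcomp Require Import spectral complex.
From mathcomp Require Import reals exp.
From mathcomp Require Import ring lra.

Set Implicit Arguments.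
Unset Strict Implicit.
Unset Printing Implicit Defensive.

Import Order.TTheory GRing.Theory Num.Theory Num.Def.
Local Open Scope ring_scope.

Section Logarithms.
Variable R : realType.

Lemma ln2_gt0 : 0 < ln (2 : R).
Proof. by apply: ln_gt0; rewrite ltr1n. Qed.

Lemma xlog2xE (p : R) : xlog2x p = p * log2 p.
Proof. by rewrite /xlog2x; case: eqP => // ->; rewrite mul0r. Qed.

Lemma log2M (x y : R) : 0 < x -> 0 < y -> log2 (x * y) = log2 x + log2 y.
Proof. by move=> x_gt0 y_gt0; rewrite /log2 lnM ?posrE // mulrDl. Qed.

Lemma ln_lt_subr1 (t : R) : 0 < t -> t != 1 -> ln t < t - 1.
Proof.
move=> t_gt0 t_neq1; have lnt_neq0 : ln t != 0 by rewrite ln_eq0.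
by have := expR_gt1Dx lnt_neq0; rewrite lnK ?posrE //; lra.
Qed.

Definition kl_term (p q : R) := p * ln p - p * ln q - (p - q).

Lemma kl_termE (p q : R) : 0 < p -> 0 < q ->
  kl_term p q = p * (q / p - 1 - ln (q / p)).
Proof.
move=> p_gt0 q_gt0; rewrite /kl_term ln_div ?posrE //.
by field; rewrite gt_eqF.
Qed.

Lemma kl_term_ge0 (p q : R) : 0 <= p -> 0 < q -> 0 <= kl_term p q.
Proof.
rewrite le0r => /predU1P [-> q_gt0|p_gt0 q_gt0].
  by rewrite /kl_term !mul0r !subr0 !sub0r opprK ltW.
rewrite kl_termE //; apply: mulr_ge0; first exact: ltW.
have [->|t_neq1] := eqVneq (q / p) 1; first by rewrite ln1; lra.
by have := ln_lt_subr1 (divr_gt0 q_gt0 p_gt0) t_neq1; lra.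
Qed.

Lemma kl_term_eq0 (p q : R) : 0 <= p -> 0 < q -> kl_term p q = 0 -> p = q.
Proof.
rewrite le0r => /predU1P [-> q_gt0|p_gt0 q_gt0].
  by rewrite /kl_term !mul0r !subr0 !sub0r opprK => q0; move: q_gt0; rewrite q0 ltxx.
rewrite kl_termE // => /eqP; rewrite mulf_eq0 gt_eqF //= => /eqP kl0.
have [/divr1_eq //|t_neq1] := eqVneq (q / p) 1.
by have := ln_lt_subr1 (divr_gt0 q_gt0 p_gt0) t_neq1; lra.
Qed.

End Logarithms.

Section BigOps.
Variable S : comNzRingType.

Lemma sum_delta (I : finType) (a : I) (F : I -> S) :
  \sum_b (a == b)%:R * F b = F a.
Proof.
rewrite (bigD1 a) //= eqxx mul1r big1 ?addr0 // => b /negbTE.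
by rewrite eq_sym => ->; rewrite mul0r.
Qed.

Lemma prod_nat_forall (I : finType) (P b : pred I) :
  \prod_(k | P k) ((b k)%:R : S) = [forall k, P k ==> b k]%:R.
Proof.
have [/forallP Pb|/forallPn [k]] := boolP [forall k, P k ==> b k].
  by rewrite big1 // => k Pk; move: (Pb k); rewrite Pk => /= ->.
by rewrite negb_imply => /andP [Pk /negbTE bk]; rewrite (bigD1 k) //= bk mul0r.
Qed.

Lemma sum_dffun_prod (I : finType) (T_ : I -> finType) (F : forall i, T_ i -> S) :
  \sum_(x : {dffun forall i, T_ i}) \prod_i F i (x i) = \prod_i \sum_(t : T_ i) F i t.
Proof.
rewrite (reindex (@dffun_of_fprod I T_)); last exact/onW_bij/dffun_of_fprod_bij.
pose G i := [ffun t => F i t].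
transitivity (\sum_(t : fprod T_) \prod_(i in I) G i (t i)).
  by apply: eq_bigr => t _; apply: eq_bigr => i _; rewrite !ffunE.
transitivity (\prod_i \sum_(t : T_ i) G i t); last first.
  by apply: eq_bigr => i _; apply: eq_bigr => t _; rewrite ffunE.
rewrite big_fprod.
under [RHS]eq_bigr => i _ do rewrite (big_tag (fun i t => G i t) i).
by rewrite bigA_distr_big_dep.
Qed.

Lemma sum_dffun_box (I : finType) (T_ : I -> finType) (A : forall i, pred (T_ i))
    (F : forall i, T_ i -> S) :
  \sum_(x : {dffun forall i, T_ i} | [forall i, A i (x i)]) \prod_i F i (x i) =
  \prod_i \sum_(t | A i t) F i t.
Proof.
rewrite big_mkcond /=.
under eq_bigr => x _.
  have -> : (if [forall i, A i (x i)] then \prod_i F i (x i) else 0) =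
      \prod_i (if A i (x i) then F i (x i) else 0).
    have [/forallP Ax|/forallPn [i /negbTE Axi]] := boolP [forall i, A i (x i)].
      by apply: eq_bigr => i _; rewrite Ax.
    by rewrite (bigD1 i) //= Axi mul0r.
  over.
rewrite (sum_dffun_prod (fun i t => if A i t then F i t else 0)).
by apply: eq_bigr => i _; rewrite -big_mkcond.
Qed.

End BigOps.

Section UnionBound.
Variable R : realType.

Lemma sum_predNN (I : finType) (F : I -> R) (a b : pred I) :
  \sum_(x | ~~ a x && ~~ b x) F x =
  \sum_x F x - \sum_(x | a x) F x - \sum_(x | b x) F x + \sum_(x | a x && b x) F x.
Proof.
rewrite !(big_mkcond (fun x => _ && _)) (big_mkcond a) (big_mkcond b).
rewrite -!sumrB -big_split /=; apply: eq_bigr => x _.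
by case: (a x); case: (b x) => /=; ring.
Qed.

Lemma sum_union_bound (I J : finType) (F : I -> R) (A : pred I) (K : pred J)
    (B : J -> pred I) : (forall x, 0 <= F x) ->
  \sum_(x | A x) F x - \sum_(j | K j) \sum_(x | A x && B j x) F x <=
  \sum_(x | A x && [forall j, K j ==> ~~ B j x]) F x.
Proof.
move=> F_ge0; set G := fun x => [forall j, K j ==> ~~ B j x].
rewrite lerBlDr (bigID G) /= lerD2l.
rewrite (exchange_big_dep A) /= => [|j x _ /andP []//].
apply: (@le_trans _ _ (\sum_(x | A x && ~~ G x) \sum_(j | K j && (A x && B j x)) F x)).
  apply: ler_sum => x /andP [Ax /forallPn [j]]; rewrite negb_imply negbK => /andP [Kj Bjx].
  rewrite (bigD1 j) ?Kj ?Ax ?Bjx //= lerDl.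
  by apply: sumr_ge0 => j' _; exact: F_ge0.
rewrite [X in _ <= X](bigID G) /= lerDr.
by apply: sumr_ge0 => x _; apply: sumr_ge0 => j _; exact: F_ge0.
Qed.

End UnionBound.

Section Spectrum.
Variable R : realType.
Local Notation C := R[i].

Lemma Re_sum (I : finType) (P : pred I) (F : I -> C) :
  complex.Re (\sum_(i | P i) F i) = \sum_(i | P i) complex.Re (F i).
Proof. by apply: (big_morph (@complex.Re R)) => // -[a b] [c d]. Qed.

Lemma normsq_ge0 (z : C) : 0 <= normsq z.
Proof. by rewrite /normsq addr_ge0 // sqr_ge0. Qed.

Lemma normsqE (z : C) : (normsq z)%:C%C = z^* * z.
Proof. by rewrite /normsq add_Re2_Im2 normCKC. Qed.

Lemma sum_normsqE (I : finType) (P : pred I) (z : I -> C) :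
  (\sum_(i | P i) normsq (z i))%:C%C = \sum_(i | P i) (z i)^* * z i.
Proof. by rewrite rmorph_sum; apply: eq_bigr => i _; exact: normsqE. Qed.

Lemma realC_inj : injective (fun r : R => r%:C%C).
Proof. by move=> r r' /(congr1 (@complex.Re R)). Qed.

Lemma sum_enum_val (T : finType) (F : T -> C) :
  \sum_p F p = \sum_(a < #|T|) F (enum_val a).
Proof. by rewrite -big_enum_val; apply: eq_bigl => p; rewrite inE. Qed.

Definition qform (T : finType) (f : T -> T -> C) (v : T -> C) : C :=
  \sum_p \sum_q (v p)^* * f p q * v q.

Section Hermitian.
Local Open Scope sesquilinear_scope.
Variables (T : finType) (f : T -> T -> C).
Hypothesis f_herm : forall p q, f q p = (f p q)^*.

Let A := mx_of_fun f.
Let P := spectralmx A.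
Let s := spectral_diag A.

Definition spec (k : 'I_#|T|) : R := complex.Re (s 0 k).

Lemma mx_of_fun_herm : A \is hermsymmx.
Proof.
apply/is_hermitianmxP; rewrite expr0 scale1r; apply/matrixP => a b.
by rewrite !mxE f_herm.
Qed.

Lemma spectral_decomp : A = P^t* *m diag_mx s *m P.
Proof.
have /orthomx_spectralP := hermitian_normalmx mx_of_fun_herm.
by rewrite invmx_unitary ?spectral_unitarymx.
Qed.

Lemma mulmx_spectral_tr : P *m P^t* = 1%:M.
Proof. exact/unitarymxP/spectral_unitarymx. Qed.

Lemma mulmx_tr_spectral : P^t* *m P = 1%:M.
Proof.
have /unitarymxP : P^t* \is unitarymx by rewrite trmxC_unitary spectral_unitarymx.
by rewrite trmxCK.
Qed.

Lemma spectral_mulmx : P *m A = diag_mx s *m P.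
Proof. by rewrite {1}spectral_decomp !mulmxA mulmx_spectral_tr mul1mx. Qed.

Lemma spectral_eigen k b : \sum_a P k a * A a b = s 0 k * P k b.
Proof. by have /matrixP/(_ k b) := spectral_mulmx; rewrite mul_diag_mx !mxE. Qed.

Lemma mx_of_funE a b : A a b = \sum_k (P k a)^* * s 0 k * P k b.
Proof.
by rewrite {1}spectral_decomp mxE; apply: eq_bigr => k _; rewrite mul_mx_diag !mxE.
Qed.

Lemma qform_spectralmx k : qform f (fun p => (P k (enum_rank p))^*) = s 0 k.
Proof.
have /matrixP/(_ k k) : P *m A *m P^t* = diag_mx s.
  by rewrite spectral_mulmx -mulmxA mulmx_spectral_tr mulmx1.
rewrite !mxE eqxx mulr1n => <-; rewrite /qform sum_enum_val.
under eq_bigr => a _ do rewrite sum_enum_val.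
rewrite exchange_big; apply: eq_bigr => b _; rewrite !mxE big_distrl.
by apply: eq_bigr => a _; rewrite conjCK !enum_valK !mxE.
Qed.

Variable u : T -> T -> C.
Hypothesis u_orth : forall l l', \sum_p (u l p)^* * u l' p = (l == l')%:R.
Hypothesis u_compl : forall p p', \sum_l (u l p)^* * u l p' = (p == p')%:R.

Definition overlap k l := \sum_b P k b * u l (enum_val b).

Lemma qform_overlap l :
  qform f (u l) = \sum_k s 0 k * ((overlap k l)^* * overlap k l).
Proof.
rewrite /qform sum_enum_val.
under eq_bigr => a _ do rewrite sum_enum_val.
transitivity (\sum_a \sum_b \sum_k (u l (enum_val a))^* *
    ((P k a)^* * s 0 k * P k b) * u l (enum_val b)).
  apply: eq_bigr => a _; apply: eq_bigr => b _.
  have -> : f (enum_val a) (enum_val b) = A a b by rewrite mxE.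
  by rewrite mx_of_funE mulr_sumr mulr_suml.
rewrite exchange_big /=; under eq_bigr => b _ do rewrite exchange_big /=.
rewrite exchange_big /=; apply: eq_bigr => k _; rewrite exchange_big /=.
rewrite /overlap rmorph_sum /= big_distrl big_distrr /=; apply: eq_bigr => a _.
rewrite big_distrr /= big_distrr /=; apply: eq_bigr => b _.
by rewrite rmorphM /=; ring.
Qed.

Lemma sum_overlap_row k : \sum_l normsq (overlap k l) = 1.
Proof.
apply: realC_inj; rewrite /= sum_normsqE rmorph1.
transitivity (\sum_l \sum_(a < #|T|) \sum_(b < #|T|)
    (P k a)^* * P k b * ((u l (enum_val a))^* * u l (enum_val b))).
  apply: eq_bigr => l _; rewrite /overlap rmorph_sum big_distrl; apply: eq_bigr => a _.
  by rewrite big_distrr; apply: eq_bigr => b _; rewrite rmorphM /=; ring.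
rewrite exchange_big /=; under eq_bigr => a _ do rewrite exchange_big /=.
under eq_bigr => a _ do under eq_bigr => b _ do
  rewrite -mulr_sumr u_compl (bij_eq (enum_val_bij T)) mulrC.
under eq_bigr => a _ do rewrite sum_delta.
have /matrixP/(_ k k) := mulmx_spectral_tr; rewrite !mxE eqxx mulr1n => <-.
by apply: eq_bigr => a _; rewrite !mxE mulrC.
Qed.

Lemma sum_overlap_col l : \sum_k normsq (overlap k l) = 1.
Proof.
apply: realC_inj; rewrite /= sum_normsqE rmorph1.
transitivity (\sum_k \sum_(a < #|T|) \sum_(b < #|T|)
    (u l (enum_val a))^* * u l (enum_val b) * ((P k a)^* * P k b)).
  apply: eq_bigr => k _; rewrite /overlap rmorph_sum big_distrl; apply: eq_bigr => a _.
  by rewrite big_distrr; apply: eq_bigr => b _; rewrite rmorphM /=; ring.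
rewrite exchange_big /=; under eq_bigr => a _ do rewrite exchange_big /=.
transitivity (\sum_(a < #|T|) \sum_(b < #|T|)
    (a == b)%:R * ((u l (enum_val a))^* * u l (enum_val b))).
  apply: eq_bigr => a _; apply: eq_bigr => b _; rewrite -mulr_sumr mulrC.
  have /matrixP/(_ a b) := mulmx_tr_spectral; rewrite !mxE => <-.
  by congr (_ * _); apply: eq_bigr => k _; rewrite !mxE.
under eq_bigr => a _ do rewrite sum_delta.
by rewrite -(sum_enum_val (fun p => (u l p)^* * u l p)) u_orth eqxx.
Qed.

Section Eigenbasis.
Variable lam : T -> R.
Hypothesis u_eigen : forall l p, \sum_q f p q * u l q = (lam l)%:C%C * u l p.

Lemma overlap_eigen k l : overlap k l != 0 -> s 0 k = (lam l)%:C%C.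
Proof.
have lamE : \sum_a P k a * \sum_b A a b * u l (enum_val b) = (lam l)%:C%C * overlap k l.
  rewrite /overlap mulr_sumr; apply: eq_bigr => a _.
  rewrite (eq_bigr (fun b => f (enum_val a) (enum_val b) * u l (enum_val b))).
    by rewrite -(sum_enum_val (fun q => f (enum_val a) q * u l q)) u_eigen; ring.
  by move=> b _; rewrite mxE.
have sE : \sum_a P k a * \sum_b A a b * u l (enum_val b) = s 0 k * overlap k l.
  under eq_bigr => a _ do rewrite mulr_sumr.
  rewrite exchange_big /= /overlap mulr_sumr; apply: eq_bigr => b _.
  by rewrite mulrA -spectral_eigen mulr_suml; apply: eq_bigr => a _; ring.
move=> ovl_neq0; apply: (mulIf ovl_neq0); by rewrite -sE lamE.
Qed.

Lemma sum_xlog2x_spec : \sum_k xlog2x (spec k) = \sum_l xlog2x (lam l).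
Proof.
transitivity (\sum_k \sum_l normsq (overlap k l) * xlog2x (spec k)).
  by apply: eq_bigr => k _; rewrite -mulr_suml sum_overlap_row mul1r.
transitivity (\sum_l \sum_k normsq (overlap k l) * xlog2x (lam l)); last first.
  by apply: eq_bigr => l _; rewrite -mulr_suml sum_overlap_col mul1r.
rewrite exchange_big /=; apply: eq_bigr => l _; apply: eq_bigr => k _.
have [->|/overlap_eigen lamE] := eqVneq (overlap k l) 0.
  by rewrite /normsq /= expr0n addr0 !mul0r.
by rewrite /spec lamE.
Qed.

Lemma vN_entropy_eigenbasis : vN_entropy f = - \sum_l xlog2x (lam l).
Proof. by rewrite /vN_entropy -sum_xlog2x_spec. Qed.

End Eigenbasis.

Hypothesis f_psd : forall v, 0 <= qform f v.

Lemma spectral_diag_ge0 k : 0 <= s 0 k.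
Proof. by rewrite -qform_spectralmx f_psd. Qed.

Lemma spectral_diagE k : s 0 k = (spec k)%:C%C.
Proof.
have := spectral_diag_ge0 k; rewrite lecE => /andP [/eqP im0 _].
by rewrite /spec {1}[s 0 k]complexE im0 /= mulr0 addr0.
Qed.

Lemma spec_ge0 k : 0 <= spec k.
Proof. by have := spectral_diag_ge0 k; rewrite spectral_diagE lecR. Qed.

Definition udiag l := complex.Re (qform f (u l)).

Lemma udiagE l : udiag l = \sum_k spec k * normsq (overlap k l).
Proof.
rewrite /udiag qform_overlap Re_sum; apply: eq_bigr => k _.
by rewrite -normsqE spectral_diagE -rmorphM.
Qed.

Lemma sum_udiag : \sum_l udiag l = \sum_k spec k.
Proof.
under eq_bigr => l _ do rewrite udiagE.
rewrite exchange_big /=; apply: eq_bigr => k _.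
by rewrite -mulr_sumr sum_overlap_row mulr1.
Qed.

Lemma sum_kl_term_overlap (q : T -> R) :
  \sum_k \sum_l normsq (overlap k l) * kl_term (spec k) (q l) =
  ln 2 * (\sum_k xlog2x (spec k) - \sum_l udiag l * log2 (q l))
  - \sum_k spec k + \sum_l q l.
Proof.
have row_avg k (F : R) : \sum_l normsq (overlap k l) * F = F.
  by rewrite -mulr_suml sum_overlap_row mul1r.
have -> : \sum_l q l = \sum_k \sum_l normsq (overlap k l) * q l.
  rewrite exchange_big; apply: eq_bigr => l _.
  by rewrite -mulr_suml sum_overlap_col mul1r.
have -> : \sum_l udiag l * log2 (q l) =
    \sum_k \sum_l normsq (overlap k l) * (spec k * log2 (q l)).
  rewrite exchange_big; apply: eq_bigr => l _; rewrite udiagE mulr_suml.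
  by apply: eq_bigr => k _; ring.
under [\sum_k xlog2x _]eq_bigr => k _ do rewrite -[xlog2x _](row_avg k).
under [\sum_k spec k]eq_bigr => k _ do rewrite -[spec k](row_avg k).
rewrite -sumrB mulr_sumr -sumrB -big_split /=; apply: eq_bigr => k _.
rewrite -sumrB mulr_sumr -sumrB -big_split /=; apply: eq_bigr => l _.
by rewrite /kl_term xlog2xE /log2; field; rewrite gt_eqF ?ln2_gt0.
Qed.

Lemma udiag_eq_of_entropy_eq (q : T -> R) :
  (forall l, 0 <= q l) -> \sum_l q l = 1 -> \sum_l udiag l = 1 ->
  (forall l, q l = 0 -> udiag l = 0) ->
  \sum_k xlog2x (spec k) = \sum_l udiag l * log2 (q l) ->
  forall l, udiag l = q l.
Proof.
move=> q_ge0 q_sum1 udiag_sum1 q0_udiag0 entropy_eq.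
(* The Klein terms [tau k l] are nonnegative and, by [sum_kl_term_overlap],
   sum to zero; so [spec k = q l] whenever [overlap k l != 0]. *)
pose tau k l := normsq (overlap k l) * kl_term (spec k) (q l).
have tau_ge0 k l : 0 <= tau k l.
  have [ql0|ql_neq0] := eqVneq (q l) 0.
    have -> : tau k l = spec k * normsq (overlap k l) * (ln (spec k) - ln (q l) - 1).
      by rewrite /tau /kl_term ql0; ring.
    have -> : spec k * normsq (overlap k l) = 0.
      have := q0_udiag0 l ql0; rewrite udiagE => /psumr_eq0P; apply=> // k' _.
      by rewrite mulr_ge0 ?spec_ge0 ?normsq_ge0.
    by rewrite mul0r.
  by rewrite mulr_ge0 ?normsq_ge0 ?kl_term_ge0 ?spec_ge0 // lt_neqAle eq_sym ql_neq0 q_ge0.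
have tau0 k l : tau k l = 0.
  have sum_tau0 : \sum_k \sum_l tau k l = 0.
    rewrite sum_kl_term_overlap entropy_eq -sum_udiag udiag_sum1 q_sum1; ring.
  have sum_row0 : \sum_l' tau k l' = 0.
    apply: (psumr_eq0P _ sum_tau0) => // k' _.
    by apply: sumr_ge0 => l' _; exact: tau_ge0.
  by apply: (psumr_eq0P _ sum_row0) => // l' _; exact: tau_ge0.
move=> l; have [ql0|ql_neq0] := eqVneq (q l) 0; first by rewrite ql0 q0_udiag0.
have ql_gt0 : 0 < q l by rewrite lt_neqAle eq_sym ql_neq0 q_ge0.
rewrite udiagE -[q l]mul1r -(sum_overlap_col l) mulr_suml; apply: eq_bigr => k _.
have [->|ovl_neq0] := eqVneq (normsq (overlap k l)) 0; first by rewrite mulr0 mul0r.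
have /eqP := tau0 k l; rewrite mulf_eq0 (negbTE ovl_neq0) => /eqP.
by move/kl_term_eq0 => -> //; [exact: mulrC | exact: spec_ge0].
Qed.

End Hermitian.
End Spectrum.

Section Unitary.
Variable R : realType.
Local Notation C := R[i].

Lemma unitary_orth n (M : 'M[C]_n) : M \is unitarymx ->
  forall l l', \sum_p (M l p)^* * M l' p = (l == l')%:R.
Proof.
move=> /unitarymxP /matrixP M_unit l l'; have := M_unit l' l; rewrite !mxE eq_sym => <-.
by apply: eq_bigr => p _; rewrite !mxE mulrC.
Qed.

Lemma unitary_compl n (M : 'M[C]_n) : M \is unitarymx ->
  forall p p', \sum_l (M l p)^* * M l p' = (p == p')%:R.
Proof.
rewrite -trmxC_unitary => /unitarymxP; rewrite trmxCK => /matrixP M_unit p p'.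
by have := M_unit p p'; rewrite !mxE => <-; apply: eq_bigr => l _; rewrite !mxE.
Qed.

Variables (n m : nat) (M : 'M[C]_n) (M' : 'M[C]_m).
Hypotheses (M_unitary : M \is unitarymx) (M'_unitary : M' \is unitarymx).

Lemma unitary_tensor_orth (l l' : 'I_n * 'I_m) :
  \sum_p (M l.1 p.1 * M' l.2 p.2)^* * (M l'.1 p.1 * M' l'.2 p.2) = (l == l')%:R.
Proof.
transitivity ((\sum_s (M l.1 s)^* * M l'.1 s) * (\sum_t (M' l.2 t)^* * M' l'.2 t)).
  by rewrite big_distrlr pair_big; apply: eq_bigr => -[s t] _; rewrite rmorphM /=; ring.
rewrite !unitary_orth //.
by case: l l' => [a b] [a' b']; rewrite xpair_eqE -mulnb natrM.
Qed.

Lemma unitary_tensor_compl (p p' : 'I_n * 'I_m) :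
  \sum_l (M l.1 p.1 * M' l.2 p.2)^* * (M l.1 p'.1 * M' l.2 p'.2) = (p == p')%:R.
Proof.
transitivity ((\sum_s (M s p.1)^* * M s p'.1) * (\sum_t (M' t p.2)^* * M' t p'.2)).
  by rewrite big_distrlr pair_big; apply: eq_bigr => -[s t] _; rewrite rmorphM /=; ring.
rewrite !unitary_compl //.
by case: p p' => [a b] [a' b']; rewrite xpair_eqE -mulnb natrM.
Qed.

End Unitary.

Section Marginals.
Variable R : realType.
Local Notation C := R[i].

Lemma sum_kernel_eq_ge0 (I K : finType) (kappa : I -> K) (a : I -> C) :
  0 <= \sum_x \sum_y (kappa x == kappa y)%:R * (a x * (a y)^*).
Proof.
pose b z := \sum_(x | kappa x == z) a x.
suff -> : \sum_x \sum_y (kappa x == kappa y)%:R * (a x * (a y)^*) = \sum_z b z * (b z)^*.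
  by apply: sumr_ge0 => z _; exact: mul_conjC_ge0.
rewrite (partition_big kappa xpredT) //=; apply: eq_bigr => z _.
rewrite /b rmorph_sum big_distrl /=; apply: eq_bigr => x /eqP kx.
rewrite big_distrr /= (bigID (fun y => kappa y == z)) /= addrC big1 ?add0r.
  by apply: eq_bigr => y /eqP ky; rewrite kx ky eqxx mul1r.
by move=> y /negbTE ky; rewrite kx eq_sym ky mul0r.
Qed.

Section PartialTrace.
Variables (N : nat) (d : 'I_N -> nat) (V : Idx d -> C).
Variables (T : finType) (kx : Idx d -> T) (rel : rel (Idx d)) (f : T -> T -> C).
(* [f] is the reduced state of |V><V| on the subsystem read off by [kx];
   [rel x y] says that [x] and [y] agree on the traced-out subsystems. *)
Hypothesis fE : forall p q, f p q =
  \sum_x \sum_y (kx x == p)%:R * (kx y == q)%:R * (rel x y)%:R * (V x * (V y)^*).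

Lemma qform_partial v : qform f v =
  \sum_x \sum_y (rel x y)%:R * ((v (kx x))^* * V x * (V y)^* * v (kx y)).
Proof.
symmetry; transitivity (\sum_x \sum_y \sum_p (kx x == p)%:R * \sum_q (kx y == q)%:R *
    ((rel x y)%:R * ((v p)^* * V x * (V y)^* * v q))).
  by apply: eq_bigr => x _; apply: eq_bigr => y _; rewrite !sum_delta.
under eq_bigr => x _ do under eq_bigr => y _ do under eq_bigr => p _ do rewrite mulr_sumr.
under eq_bigr => x _ do rewrite exchange_big.
rewrite exchange_big; apply: eq_bigr => p _.
under eq_bigr => x _ do rewrite exchange_big.
rewrite exchange_big; apply: eq_bigr => q _.
rewrite fE mulr_sumr mulr_suml; apply: eq_bigr => x _.
rewrite mulr_sumr mulr_suml; apply: eq_bigr => y _.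
by ring.
Qed.

Hypothesis rel_sym : forall x y, rel x y = rel y x.

Lemma partial_herm p q : f q p = (f p q)^*.
Proof.
rewrite !fE rmorph_sum exchange_big /=; apply: eq_bigr => y _.
rewrite rmorph_sum; apply: eq_bigr => x _.
by rewrite !rmorphM /= !conjC_nat conjCK rel_sym; ring.
Qed.

Variables (K : finType) (kappa : Idx d -> K).
Hypothesis rel_kappa : forall x y, rel x y = (kappa x == kappa y).

Lemma partial_psd v : 0 <= qform f v.
Proof.
pose a x := (v (kx x))^* * V x.
suff -> : qform f v = \sum_x \sum_y (kappa x == kappa y)%:R * (a x * (a y)^*).
  exact: sum_kernel_eq_ge0.
rewrite qform_partial; apply: eq_bigr => x _; apply: eq_bigr => y _.
by rewrite rel_kappa /a rmorphM /= conjCK; ring.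
Qed.

End PartialTrace.

Section Coefficients.
Variables (N : nat) (d : 'I_N -> nat) (U : forall i : 'I_N, 'M[C]_(d i)) (V : Idx d -> C).
Local Notation c := (coeff U V).

Lemma coeff_normsqE x : (c x)^* * c x =
  \sum_y \sum_y' (V y)^* * V y' * \prod_i (U i (x i) (y i) * (U i (x i) (y' i))^*).
Proof.
rewrite /coeff rmorph_sum big_distrl /=; apply: eq_bigr => y _.
rewrite big_distrr /=; apply: eq_bigr => y' _.
rewrite big_split /= rmorphM rmorph_prod /=.
by under eq_bigr => i _ do rewrite conjCK; ring.
Qed.

Lemma sum_coeff_box (A : forall i, pred 'I_(d i)) :
  \sum_(x : Idx d | [forall i, A i (x i)]) (c x)^* * c x =
  \sum_y \sum_y' (V y)^* * V y' * \prod_i \sum_(t | A i t) U i t (y i) * (U i t (y' i))^*.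
Proof.
under eq_bigr => x _ do rewrite coeff_normsqE.
rewrite exchange_big /=; apply: eq_bigr => y _.
rewrite exchange_big /=; apply: eq_bigr => y' _.
by rewrite -mulr_sumr (sum_dffun_box A (fun i t => U i t (y i) * (U i t (y' i))^*)).
Qed.

Definition agree_on (P : pred 'I_N) (x y : Idx d) :=
  [forall k, P k ==> (val (x k) == val (y k))].

Definition restrict (P : pred 'I_N) (x : Idx d) : {dffun forall k, option 'I_(d k)} :=
  [ffun k => if P k then Some (x k) else None].

Lemma agree_onE P x y : agree_on P x y = (restrict P x == restrict P y).
Proof.
apply/forallP/eqP => [agree|xy k].
  apply/ffunP => k; rewrite !ffunE; case: ifP => Pk //.
  by move: (agree k); rewrite Pk val_eqE => /eqP ->.
apply/implyP => Pk; have := congr1 (fun g : {dffun _} => g k) xy.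
by rewrite !ffunE Pk val_eqE => -[->].
Qed.

Lemma agree_on_sym P x y : agree_on P x y = agree_on P y x.
Proof. by rewrite !agree_onE eq_sym. Qed.

Lemma agree_on_predT x y : agree_on predT x y = (x == y).
Proof.
apply/forallP/eqP => [agree|-> k]; last by rewrite eqxx.
by apply/ffunP => k; apply/val_inj/eqP; exact: agree k.
Qed.

Lemma red1E i a b : red1 V a b = \sum_(x : Idx d) \sum_(y : Idx d)
  (x i == a)%:R * (y i == b)%:R * (agree_on (predC1 i) x y)%:R * (V x * (V y)^*).
Proof.
rewrite /red1 big_mkcond /=; apply: eq_bigr => x _.
case: eqP => _ /=; last by rewrite big1 // => y _; rewrite !mul0r.
rewrite big_mkcond /=; apply: eq_bigr => y _.
rewrite -[[forall k, _]]/(agree_on (predC1 i) x y).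
by case: (y i == b); case: (agree_on _ x y); rewrite /= ?mul1r ?mul0r ?mulr0.
Qed.

Lemma red2E i j p q : red2 V p q = \sum_(x : Idx d) \sum_(y : Idx d)
  ((x i, x j) == p)%:R * ((y i, y j) == q)%:R *
  (agree_on [pred k | (k != i) && (k != j)] x y)%:R * (V x * (V y)^*).
Proof.
case: p q => [p1 p2] [q1 q2].
rewrite /red2 big_mkcond /=; apply: eq_bigr => x _; rewrite xpair_eqE.
case: (_ && _) => /=; last by rewrite big1 // => y _; rewrite !mul0r.
rewrite big_mkcond /=; apply: eq_bigr => y _; rewrite xpair_eqE.
rewrite -[[forall k, _]]/(agree_on [pred k | (k != i) && (k != j)] x y).
by case: (y i == q1); case: (y j == q2); case: (agree_on _ x y);
  rewrite /= ?mul1r ?mul0r ?mulr0.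
Qed.

Hypothesis U_unitary : forall i, U i \is unitarymx.

Lemma prod_sum_unitary_col (P : pred 'I_N) (y y' : Idx d) :
  \prod_(k | P k) \sum_t U k t (y k) * (U k t (y' k))^* = (agree_on P y' y)%:R.
Proof.
under eq_bigr => k _.
  rewrite (eq_bigr (fun t => (U k t (y' k))^* * U k t (y k))) => [|t _]; last exact: mulrC.
  by rewrite unitary_compl // -val_eqE; over.
by rewrite /= prod_nat_forall.
Qed.

Lemma sum_coeff_normsq : \sum_x normsq (c x) = \sum_x normsq (V x).
Proof.
apply: realC_inj; rewrite /= !sum_normsqE.
pose A k (t : 'I_(d k)) := true.
rewrite (eq_bigl (fun x : Idx d => [forall k, A k (x k)])) => [|x]; last exact/esym/forallP.
rewrite sum_coeff_box; apply: eq_bigr => y _.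
under eq_bigr => y' _ do rewrite (prod_sum_unitary_col xpredT) agree_on_predT eq_sym mulrC.
by rewrite sum_delta.
Qed.

Lemma coeff_marginal1 i a :
  \sum_(x : Idx d | x i == a) (c x)^* * c x = qform (red1 V (i:=i)) (U i a).
Proof.
pose A k (t : 'I_(d k)) := (k == i) ==> (val t == val a).
rewrite (eq_bigl (fun x : Idx d => [forall k, A k (x k)])) => [|x]; last first.
  apply/eqP/forallP => [xi k|xA]; first by apply/implyP => /eqP ki; subst k; rewrite xi.
  by have /implyP /(_ (eqxx i)) /eqP := xA i; exact: val_inj.
rewrite sum_coeff_box (qform_partial (red1E (i:=i))) exchange_big /=.
apply: eq_bigr => y _; apply: eq_bigr => y' _.
rewrite (bigD1 i) //= {1}/A eqxx (big_pred1 a) => [|t]; last exact: val_eqE.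
under eq_bigr => k ki do rewrite /A (negbTE ki) /=.
by rewrite (prod_sum_unitary_col (predC1 i)); ring.
Qed.

Lemma coeff_marginal2 i j a b : i != j ->
  \sum_(x : Idx d | (x i == a) && (x j == b)) (c x)^* * c x =
  qform (red2 V (i:=i) (j:=j)) (fun p => U i a p.1 * U j b p.2).
Proof.
move=> ij.
pose A k (t : 'I_(d k)) :=
  ((k == i) ==> (val t == val a)) && ((k == j) ==> (val t == val b)).
rewrite (eq_bigl (fun x : Idx d => [forall k, A k (x k)])) => [|x]; last first.
  apply/andP/forallP => [[/eqP xi /eqP xj] k|xA].
    by apply/andP; split; apply/implyP => /eqP ki; subst k; rewrite ?xi ?xj.
  have /andP [/implyP /(_ (eqxx i)) /eqP xi _] := xA i.
  have /andP [_ /implyP /(_ (eqxx j)) /eqP xj] := xA j.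
  by split; apply/eqP/val_inj.
rewrite sum_coeff_box (qform_partial (red2E (i:=i) (j:=j))) exchange_big /=.
apply: eq_bigr => y _; apply: eq_bigr => y' _.
rewrite (bigD1 i) //= (bigD1 j) /=; last by rewrite eq_sym.
rewrite {1}/A eqxx (negbTE ij) /= (big_pred1 a) => [|t]; last by rewrite andbT val_eqE.
rewrite {1}/A eqxx eq_sym (negbTE ij) /= (big_pred1 b) => [|t]; last exact: val_eqE.
under eq_bigr => k /andP [ki kj] do rewrite /A (negbTE ki) (negbTE kj) /=.
rewrite (prod_sum_unitary_col [pred k | (k != i) && (k != j)]) !rmorphM /=.
by ring.
Qed.

End Coefficients.
End Marginals.

Section OutcomeDistribution.
Variable R : realType.
Local Notation C := R[i].
Variables (N : nat) (d : 'I_N -> nat) (V : Idx d -> C).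
Hypothesis V_normed : \sum_x normsq (V x) = 1.
Variable U : forall i : 'I_N, 'M[C]_(d i).
Hypothesis U_unitary : forall i, U i \is unitarymx.
Unset Implicit Arguments.
Variable lam : forall i : 'I_N, 'I_(d i) -> R.
Set Implicit Arguments.
Hypothesis U_eigen : forall i (k a : 'I_(d i)),
  \sum_b red1 V a b * U i k b = (lam i k)%:C%C * U i k a.

Definition prob (x : Idx d) := normsq (coeff U V x).

Lemma prob_ge0 x : 0 <= prob x.
Proof. exact: normsq_ge0. Qed.

Lemma sum_prob : \sum_x prob x = 1.
Proof. by rewrite -V_normed sum_coeff_normsq. Qed.

Lemma red1_herm i (a b : 'I_(d i)) : red1 V b a = (red1 V a b)^*.
Proof. by apply: (partial_herm (red1E V (i:=i))) => x y; exact: agree_on_sym. Qed.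

Lemma qform_red1_eigen i k : qform (red1 V (i:=i)) (U i k) = (lam i k)%:C%C.
Proof.
rewrite /qform (eq_bigr (fun p => (lam i k)%:C%C * ((U i k p)^* * U i k p))) => [|p _].
  by rewrite -mulr_sumr unitary_orth // eqxx mulr1.
by under eq_bigr => q _ do rewrite -mulrA; rewrite -mulr_sumr U_eigen; ring.
Qed.

Lemma sum_prob_eq i a : \sum_(x : Idx d | x i == a) prob x = lam i a.
Proof.
by apply: realC_inj; rewrite /= sum_normsqE coeff_marginal1 // qform_red1_eigen.
Qed.

Lemma lam_ge0 i a : 0 <= lam i a.
Proof. by rewrite -sum_prob_eq sumr_ge0 // => x _; exact: prob_ge0. Qed.

Lemma sum_lam i : \sum_a lam i a = 1.
Proof.
rewrite -sum_prob (partition_big (fun x : Idx d => x i) xpredT) //=.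
by apply: eq_bigr => a _; rewrite -sum_prob_eq.
Qed.

Lemma sum_prob_neq i a : \sum_(x : Idx d | x i != a) prob x = 1 - lam i a.
Proof.
have := sum_prob; rewrite (bigID (fun x : Idx d => x i == a)) /= sum_prob_eq => <-.
by rewrite addrC addrK.
Qed.

Lemma H1_eigen i : H1 V i = - \sum_a xlog2x (lam i a).
Proof.
exact: (vN_entropy_eigenbasis (@red1_herm i) (unitary_orth (U_unitary i))
  (unitary_compl (U_unitary i)) (U_eigen (i:=i))).
Qed.

Section Pair.
Variables (i j : 'I_N).
Hypothesis ij : i != j.
Hypothesis no_mutinf : mutinf V i j = 0.

Local Notation f2 := (red2 V (i:=i) (j:=j)).
Let u (l p : 'I_(d i) * 'I_(d j)) := U i l.1 p.1 * U j l.2 p.2.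

Definition pair_prob (l : 'I_(d i) * 'I_(d j)) :=
  \sum_(x : Idx d | (x i == l.1) && (x j == l.2)) prob x.

Lemma pair_prob_udiag l : udiag f2 u l = pair_prob l.
Proof. by rewrite /udiag -coeff_marginal2 // -sum_normsqE. Qed.

Lemma pair_prob_ge0 l : 0 <= pair_prob l.
Proof. by apply: sumr_ge0 => x _; exact: prob_ge0. Qed.

Lemma sum_pair_prob_row a : \sum_b pair_prob (a, b) = lam i a.
Proof. by rewrite -sum_prob_eq (partition_big (fun x : Idx d => x j) xpredT). Qed.

Lemma sum_pair_prob_col b : \sum_a pair_prob (a, b) = lam j b.
Proof.
rewrite -sum_prob_eq (partition_big (fun x : Idx d => x i) xpredT) //=.
by apply: eq_bigr => a _; apply: eq_bigl => x; rewrite andbC.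
Qed.

Lemma sum_pair_prob : \sum_l pair_prob l = 1.
Proof.
rewrite -(pair_big xpredT xpredT (fun a b => pair_prob (a, b))) /=.
by under eq_bigr => a _ do rewrite sum_pair_prob_row; exact: sum_lam.
Qed.

Lemma red2_herm p q : f2 q p = (f2 p q)^*.
Proof. by apply: (partial_herm (red2E V (i:=i) (j:=j))) => x y; exact: agree_on_sym. Qed.

Lemma red2_psd v : 0 <= qform f2 v.
Proof. exact: (partial_psd (red2E V (i:=i) (j:=j)) (agree_onE _)). Qed.

Lemma pair_prob_eq0 l : lam i l.1 * lam j l.2 = 0 -> pair_prob l = 0.
Proof.
case: l => a b /= /eqP; rewrite mulf_eq0 => /orP [] /eqP lam0.
  have := sum_pair_prob_row a; rewrite lam0 => /psumr_eq0P; apply=> // b' _.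
  exact: pair_prob_ge0.
have := sum_pair_prob_col b; rewrite lam0 => /psumr_eq0P; apply=> // a' _.
exact: pair_prob_ge0.
Qed.

Lemma sum_pair_prob_log2 :
  \sum_l pair_prob l * log2 (lam i l.1 * lam j l.2) =
  \sum_a xlog2x (lam i a) + \sum_b xlog2x (lam j b).
Proof.
transitivity (\sum_l pair_prob l * (log2 (lam i l.1) + log2 (lam j l.2))).
  apply: eq_bigr => -[a b] _ /=.
  have [/(@pair_prob_eq0 (a, b)) ->|] := eqVneq (lam i a * lam j b) 0.
    by rewrite !mul0r.
  rewrite mulf_eq0 negb_or => /andP [a_neq0 b_neq0].
  by rewrite log2M // lt0r ?a_neq0 ?b_neq0 lam_ge0.
under eq_bigr => l _ do rewrite mulrDr.
rewrite big_split /=; congr (_ + _).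
  rewrite -(pair_big xpredT xpredT (fun a b => pair_prob (a, b) * log2 (lam i a))) /=.
  by apply: eq_bigr => a _; rewrite -mulr_suml sum_pair_prob_row xlog2xE.
rewrite -(pair_big xpredT xpredT (fun a b => pair_prob (a, b) * log2 (lam j b))) /=.
rewrite exchange_big; apply: eq_bigr => b _.
by rewrite -mulr_suml sum_pair_prob_col xlog2xE.
Qed.

Lemma sum_xlog2x_spec_red2 :
  \sum_k xlog2x (spec f2 k) = \sum_a xlog2x (lam i a) + \sum_b xlog2x (lam j b).
Proof. by have := no_mutinf; rewrite /mutinf !H1_eigen /H2 /vN_entropy /spec; lra. Qed.

Lemma pair_prob_prod l : pair_prob l = lam i l.1 * lam j l.2.
Proof.
rewrite -pair_prob_udiag.
apply: (udiag_eq_of_entropy_eq (u := u) (q := fun l => lam i l.1 * lam j l.2) red2_herm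
  (unitary_tensor_orth (U_unitary i) (U_unitary j))
  (unitary_tensor_compl (U_unitary i) (U_unitary j)) red2_psd) => [l'||||].
- by rewrite mulr_ge0 ?lam_ge0.
- rewrite -(pair_big xpredT xpredT (fun a b => lam i a * lam j b)) /=.
  by under eq_bigr => a _ do rewrite -mulr_sumr sum_lam mulr1; exact: sum_lam.
- by under eq_bigr => l' _ do rewrite pair_prob_udiag; exact: sum_pair_prob.
- by move=> l' /pair_prob_eq0; rewrite pair_prob_udiag.
- rewrite sum_xlog2x_spec_red2 -sum_pair_prob_log2.
  by apply: eq_bigr => l' _; rewrite pair_prob_udiag.
Qed.

Lemma sum_prob_neq2 a b :
  \sum_(x : Idx d | (x i != a) && (x j != b)) prob x = (1 - lam i a) * (1 - lam j b).
Proof.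
rewrite (sum_predNN prob (fun x => x i == a) (fun x => x j == b)) sum_prob !sum_prob_eq.
by rewrite -[\sum_(x | _ && _) _]/(pair_prob (a, b)) pair_prob_prod /=; ring.
Qed.

End Pair.
End OutcomeDistribution.

Theorem lemma2 (R : realType) (N : nat) (hN : (2 <= N)%N)
  (d : 'I_N -> nat) (hd : forall i : 'I_N, (0 < d i)%N)
  (V : Idx d -> R[i])
  (hV : \sum_(x : Idx d) normsq (V x) = 1)
  (hI : forall j : 'I_N, j != party1 hN -> mutinf V (party1 hN) j = 0)
  (U : forall i : 'I_N, 'M[R[i]]_(d i))
  (hU : forall i : 'I_N, U i \is unitarymx)
  (lam : forall i : 'I_N, 'I_(d i) -> R)
  (hlam_dec : forall (i : 'I_N) (k l : 'I_(d i)), (k <= l)%N -> lam i l <= lam i k)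
  (heig : forall (i : 'I_N) (k a : 'I_(d i)),
     \sum_(b : 'I_(d i)) red1 V a b * U i k b = (lam i k)%:C%C * U i k a) :
  let eps := fun i : 'I_N => 1 - lam i (Ordinal (hd i)) in
  let varepsilon := \sum_(i < N) eps i in
  \sum_(x : Idx d | (val (x (party1 hN)) != 0%N) &&
          [forall i, (i != party1 hN) ==> (val (x i) == 0%N)])
     normsq (coeff U V x)
  >= eps (party1 hN) * (1 + eps (party1 hN) - varepsilon).
Proof.
cbv zeta; set p1 := party1 hN; pose z k := Ordinal (hd k).
rewrite (eq_bigl (fun x : Idx d =>
    (x p1 != z p1) && [forall j, (j != p1) ==> ~~ (x j != z j)])); last first.
  move=> x; rewrite -val_eqE; congr andb.
  by apply: eq_forallb => j; rewrite negbK -val_eqE.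
apply: le_trans (sum_union_bound _ _ _ (prob_ge0 V U)).
rewrite (sum_prob_neq hV hU heig).
rewrite [X in _ <= _ - X](eq_bigr (fun j => (1 - lam p1 (z p1)) * (1 - lam j (z j)))).
  by rewrite -mulr_sumr (bigD1 p1) //=; lra.
by move=> j j_neq1; rewrite (sum_prob_neq2 hV hU heig _ (hI j j_neq1)) // eq_sym.
Qed.
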